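(* Let $\mathcal{P}$ be a finite poset such that $\mathcal{C}(\mathcal{P})$ is simplicial. Then the matrix of $\mathbf{M}_{\mathcal{P}}^{-1}$ (in the standard basis $\{\mathbf{e}_x\}_{x\in\mathcal{P}}$) has entries $[\mathbf{M}_{\mathcal{P}}^{-1}]_{xy}=1$ if $x=y$, $[\mathbf{M}_{\mathcal{P}}^{-1}]_{xy}=-1$ if $y\lessdot x$, and $[\mathbf{M}_{\mathcal{P}}^{-1}]_{xy}=0$ otherwise. In particular, when $\mathcal{P}=[p]=\{1,\dots,p\}$ is a chain with the standard order, $\mathbf{M}_{\mathcal{P}}^{-1}$ is the $p\times p$ lower bidiagonal Toeplitz matrix with $1$ on the diagonal, $-1$ on the first subdiagonal (entries $(i+1,i)$), and $0$ elsewhere.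
   Context: The order cone $\mathcal{C}(\mathcal{P})\subset\mathbb{R}^{\mathcal{P}}$ is the set of functions $\mathbf{f}$ on $\mathcal{P}$ with $f_x\ge0$ for all $x$ and $f_x\le f_y$ whenever $x\preceq y$. A cone in $\mathbb{R}^p$ is simplicial if it is the conical hull of $p$ linearly independent vectors. $y\lessdot x$ means $x$ covers $y$: $y\prec x$ and there is no $z$ with $y\prec z\prec x$. The Möbius transform $\mathbf{M}_{\mathcal{P}}$ is the linear map on $\mathbb{R}^{\mathcal{P}}$ with $\mathbf{M}_{\mathcal{P}}(\mathbf{e}_x)=\sum_{y:\,x\preceq y}\mathbf{e}_y$. *)

From HB Require Import structures.
From mathcomp Require Import all_boot all_order all_algebra.
From mathcomp Require Import reals.
Set Implicit Arguments. Unset Strict Implicit. Unset Printing Implicit Defensive.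
Import Order.TTheory GRing.Theory Num.Theory.
Local Open Scope ring_scope.
Local Open Scope order_scope.

Section Defs.
Context {disp : Order.disp_t} {T : finPOrderType disp}.

(* y ⋖ x : x covers y *)
Definition covers (y x : T) : bool :=
  (y < x) && [forall z : T, ~~ ((y < z) && (z < x))].

Context {R : realType}.

Definition order_cone (f : T -> R) : Prop :=
  (forall x, 0 <= f x) /\ (forall x y : T, x <= y -> f x <= f y).

Definition lin_indep (n : nat) (v : 'I_n -> T -> R) : Prop :=
  forall c : 'I_n -> R, (forall x, \sum_(i < n) c i * v i x = 0) ->
    forall i, c i = 0.

Definition in_conical_hull (n : nat) (v : 'I_n -> T -> R) (f : T -> R) : Prop :=
  exists lam : 'I_n -> R, (forall i, 0 <= lam i) /\
    forall x, f x = \sum_(i < n) lam i * v i x.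

Definition simplicial_order_cone : Prop :=
  exists v : 'I_#|T| -> T -> R, lin_indep v /\
    forall f, order_cone f <-> in_conical_hull v f.

(* matrix of the Möbius transform M_P (M_P e_x = sum_{x <= y} e_y) in the
   standard basis, rows/columns indexed via enum_val : 'I_#|T| -> T *)
Definition mobius_mx : 'M[R]_#|T| :=
  \matrix_(i, j) (if enum_val j <= enum_val i then 1 else 0).

End Defs.

(* If every element of P has at most one lower cover, then for y < x exactly
   one lower cover of x lies above y, so 1 - A, with A the adjacency matrix of
   the Hasse diagram, is a left inverse of M_P.

   Simpliciality forces this: for U = {z | y1 <= z} and V = {z | y2 <= z} we
   have 1_U + 1_V = 1_(U ∪ V) + 1_(U ∩ V), so by uniqueness of the conical
   coordinates some generator v occurs in 1_(U ∪ V) and in 1_U (or in 1_V).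
   A generator dominated by an up-set indicator 1_W in the cone order vanishes
   off W and is constant along comparable pairs in W. If y1 and y2 were
   incomparable with a common upper bound x, v would vanish at y2 (being below
   1_U), hence on y2, x, y1, i.e. on all of U ∪ V, so v = 0. *)

From HB Require Import structures.
From mathcomp Require Import all_boot all_order all_algebra.
From mathcomp Require Import reals.
From mathcomp Require Import lra.
Import Order.TTheory GRing.Theory Num.Theory.
Local Open Scope ring_scope.
Local Open Scope order_scope.

Section Covers.
Context {disp : Order.disp_t} {T : finPOrderType disp}.

Lemma covers_lt {y x : T} : covers y x -> y < x.
Proof. by case/andP. Qed.

Lemma lt_covers {a b : T} : a < b -> exists2 c, a <= c & covers c b.
Proof.
(* c maximises its down-set among the z with a <= z < b *)
move=> ab; pose P z := (a <= z) && (z < b).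
have Pa : P a by rewrite /P lexx ab.
case: (arg_maxnP (fun z => #|[set w | w <= z]|) Pa) => c /andP[ac cb] cmax.
exists c; rewrite // /covers cb; apply/forallP => z; apply/negP => /andP[cz zb].
have /cmax : P z by rewrite /P zb (le_trans ac (ltW cz)).
apply/negP; rewrite -ltnNge; apply/proper_card/properP; split.
  by apply/subsetP => w; rewrite !inE => wc; apply: le_trans wc (ltW cz).
by exists z; rewrite !inE ?lexx ?lt_geF.
Qed.

Lemma coversxx (x : T) : covers x x = false.
Proof. by apply/negbTE/negP => /covers_lt; rewrite ltxx. Qed.

Lemma covers_le_lt_eq {a b c : T} : covers a c -> a <= b -> b < c -> a = b.
Proof.
case/andP=> _ /forallP/(_ b) Nbetween ab bc; apply/eqP; apply: contraNT Nbetween.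
by rewrite bc andbT lt_neqAle ab andbT.
Qed.

Hypothesis lower_cover_uniq : forall a b c : T, covers a c -> covers b c -> a = b.

Lemma card_covers_above (x z : T) :
  #|[pred y | covers y x && (z <= y)]| = (z < x).
Proof.
have [zx | zNx] := boolP (z < x); last first.
  apply: eq_card0 => y; apply/negbTE; apply: contra zNx; rewrite inE => /andP[yx zy].
  exact: le_lt_trans zy (covers_lt yx).
have [c zc cx] := lt_covers zx; transitivity #|pred1 c|; last exact: card1.
apply: eq_card => y.
rewrite !inE; apply/andP/eqP => [[yx _] | ->]; last by [].
exact: lower_cover_uniq yx cx.
Qed.

End Covers.

Lemma covers_ord (p : nat) (a b : 'I_p) : covers a b = (val b == (val a).+1).
Proof.
rewrite /covers ltEord; apply/idP/eqP => [/andP[ab /forallP noz] | ba].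
  apply/eqP; rewrite eqn_leq ab andbT leqNgt; apply/negP => Sab.
  by have := noz (Ordinal (ltn_trans Sab (ltn_ord b))); rewrite /= ltnSn Sab.
rewrite ba ltnSn; apply/forallP => z.
by rewrite ltnS ltnNge andNb.
Qed.

Lemma ord_lower_cover_uniq (p : nat) (a b c : 'I_p) :
  covers a c -> covers b c -> a = b.
Proof. by rewrite !covers_ord => /eqP-> /eqP[/val_inj]. Qed.

Definition indicator {T : Type} {R : pzSemiRingType} (P : pred T) (z : T) : R :=
  if P z then 1 else 0.

Lemma indicator_or_and {T : Type} {R : pzSemiRingType} (P Q : pred T) (z : T) :
  indicator (predU P Q) z + indicator (predI P Q) z =
  indicator P z + indicator Q z :> R.
Proof. by rewrite /indicator /=; case: (P z); case: (Q z); rewrite ?addr0 ?add0r. Qed.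

Section SimplicialCone.
Context {disp : Order.disp_t} {T : finPOrderType disp} {R : realType}.

Definition upper_closed (P : pred T) := forall z z', z <= z' -> P z -> P z'.

Lemma order_cone_indicator (P : pred T) :
  upper_closed P -> order_cone (indicator P : T -> R).
Proof.
rewrite /indicator => P_up; split=> [z | z z' zz']; first by case: (P z).
by case Pz: (P z); [rewrite (P_up _ _ zz' Pz) | case: (P z')].
Qed.

Lemma upper_closed_ge (y : T) : upper_closed (>= y).
Proof. by move=> z z' zz' yz; apply: le_trans zz'. Qed.

Lemma upper_closedU {P Q : pred T} :
  upper_closed P -> upper_closed Q -> upper_closed (predU P Q).
Proof.
by move=> P_up Q_up z z' zz' /orP[/(P_up _ _ zz') | /(Q_up _ _ zz')] /= ->; rewrite ?orbT.
Qed.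

Lemma upper_closedI {P Q : pred T} :
  upper_closed P -> upper_closed Q -> upper_closed (predI P Q).
Proof. by move=> P_up Q_up z z' zz' /andP[/(P_up _ _ zz') /= -> /(Q_up _ _ zz')]. Qed.

Section BelowIndicator.
Context {P : pred T} {g : T -> R}.
Hypotheses (g_cone : order_cone g)
  (g_below : order_cone (fun z => indicator P z - g z)).

Lemma below_indicator_out z : ~~ P z -> g z = 0.
Proof.
move=> NPz; have := g_below.1 z; rewrite /indicator (negbTE NPz) sub0r oppr_ge0 => g_le0.
by apply/eqP; rewrite eq_le g_le0 g_cone.1.
Qed.

Lemma below_indicator_eq z z' : z <= z' -> P z -> P z' -> g z' = g z.
Proof.
move=> zz' Pz Pz'; have := g_below.2 _ _ zz'; rewrite /indicator Pz Pz' lerD2l lerN2.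
by move=> gz'_le; apply/eqP; rewrite eq_le gz'_le g_cone.2.
Qed.

End BelowIndicator.

Definition conical_coef {n : nat} (v : 'I_n -> T -> R) (lam : 'I_n -> R)
    (f : T -> R) :=
  (forall i, 0 <= lam i) /\ (forall x, f x = \sum_(i < n) lam i * v i x).

Section Generators.
Context {n : nat} {v : 'I_n -> T -> R}.

Hypothesis v_indep : lin_indep v.

Lemma lin_indep_coef_eq (a b : 'I_n -> R) :
  (forall x, \sum_(i < n) a i * v i x = \sum_(i < n) b i * v i x) -> a =1 b.
Proof.
move=> ab i; apply/eqP; rewrite -subr_eq0; apply/eqP; move: i; apply: v_indep => x.
by under eq_bigr do rewrite mulrBl; rewrite sumrB ab subrr.
Qed.

Lemma lin_indep_gen_neq0 k : ~ (forall z, v k z = 0).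
Proof.
move=> vk0; suff /v_indep/(_ k)/eqP : forall x, \sum_(i < n) (i == k)%:R * v i x = 0.
  by rewrite eqxx oner_eq0.
move=> x; rewrite (bigD1 k) //= vk0 mulr0 add0r big1 // => i /negbTE ->.
by rewrite mul0r.
Qed.

Hypothesis v_hull : forall f, order_cone f <-> in_conical_hull v f.

Lemma order_cone_coef_split {lam : 'I_n -> R} {f : T -> R} k : conical_coef v lam f ->
  order_cone (fun z => lam k * v k z) /\ order_cone (fun z => f z - lam k * v k z).
Proof.
move=> [lam_ge0 f_def]; split; apply/v_hull.
  exists (fun i => if i == k then lam k else 0); split=> [i | z].
    by case: ifP.
  rewrite (bigD1 k) //= eqxx big1 ?addr0 // => i /negbTE ->.
  by rewrite mul0r.
exists (fun i => if i == k then 0 else lam i); split=> [i | z].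
  by case: ifP.
rewrite f_def (bigD1 k) //= [in RHS](bigD1 k) //= eqxx mul0r add0r addrAC subrr add0r.
by apply: eq_bigr => i /negbTE ->.
Qed.

Lemma conical_coef_geU_le0 {y1 y2 x : T} {l1 lW : 'I_n -> R} {k : 'I_n} :
  y1 <= x -> y2 <= x -> ~~ (y1 <= y2) ->
  conical_coef v l1 (indicator (>= y1)) ->
  conical_coef v lW (indicator (predU (>= y1) (>= y2))) ->
  0 < l1 k -> lW k <= 0.
Proof.
move=> y1x y2x N12 c1 cW l1k_gt0; rewrite leNgt; apply/negP => lWk_gt0.
have [g1_cone g1_below] := order_cone_coef_split k c1.
have [g_cone g_below] := order_cone_coef_split k cW.
have vk_y2 : v k y2 = 0.
  have /eqP := below_indicator_out g1_cone g1_below _ N12.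
  by rewrite mulf_eq0 gt_eqF //= => /eqP.
have g_eq := below_indicator_eq g_cone g_below.
have W_y1 : predU (>= y1) (>= y2) y1 by rewrite /= lexx.
have W_y2 : predU (>= y1) (>= y2) y2 by rewrite /= lexx orbT.
have W_x : predU (>= y1) (>= y2) x by rewrite /= y1x.
have g_y2 : lW k * v k y2 = 0 by rewrite vk_y2 mulr0.
have g_y1 : lW k * v k y1 = 0.
  by rewrite -(g_eq _ _ y1x W_y1 W_x) (g_eq _ _ y2x W_y2 W_x).
apply: (lin_indep_gen_neq0 k) => z; apply: (mulfI (lt0r_neq0 lWk_gt0)).
rewrite mulr0; have [Wz | NWz] := boolP (predU (>= y1) (>= y2) z); last first.
  exact: below_indicator_out g_cone g_below _ NWz.
case/orP: (Wz) => yz; first by rewrite (g_eq _ _ yz W_y1 Wz).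
by rewrite (g_eq _ _ yz W_y2 Wz).
Qed.

End Generators.

Lemma simplicial_ub_comparable {y1 y2 x : T} : @simplicial_order_cone disp T R ->
  y1 <= x -> y2 <= x -> y1 >=< y2.
Proof.
case=> v [v_indep v_hull] y1x y2x; apply: contraT; rewrite negb_or => /andP[N12 N21].
have coef P : upper_closed P -> exists lam, conical_coef v lam (indicator P).
  by move=> P_up; apply/v_hull/order_cone_indicator.
have [l1 c1] := coef _ (upper_closed_ge y1).
have [l2 c2] := coef _ (upper_closed_ge y2).
have [lW cW] := coef _ (upper_closedU (upper_closed_ge y1) (upper_closed_ge y2)).
have [lI cI] := coef _ (upper_closedI (upper_closed_ge y1) (upper_closed_ge y2)).
have coef_sum : forall i, l1 i + l2 i = lW i + lI i.
  apply: (lin_indep_coef_eq v_indep) => z.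
  under eq_bigr do rewrite mulrDl; under [RHS]eq_bigr do rewrite mulrDl.
  by rewrite !big_split /= -c1.2 -c2.2 -cW.2 -cI.2 indicator_or_and.
have /existsP[k lWk_gt0] : [exists k, 0 < lW k].
  apply: contraT; rewrite negb_exists => /forallP lW_le0.
  have := cW.2 y1; rewrite /indicator /= lexx big1 => [/eqP | i _].
    by rewrite oner_eq0.
  by have := lW_le0 i; rewrite lt_def cW.1 andbT negbK => /eqP ->; rewrite mul0r.
have : 0 < l1 k + l2 k by rewrite coef_sum (lt_le_trans lWk_gt0) // lerDl cI.1.
have [l1k_gt0 _ | l1k_le0 l12k_gt0] := ltrP 0 (l1 k).
  have := conical_coef_geU_le0 v_indep v_hull y1x y2x N12 c1 cW l1k_gt0.
  by rewrite leNgt lWk_gt0.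
have l2k_gt0 : 0 < l2 k by lra.
have cW' : conical_coef v lW (indicator (predU (>= y2) (>= y1))).
  by split=> [|z]; [exact: cW.1 | rewrite -cW.2 /indicator /= orbC].
have := conical_coef_geU_le0 v_indep v_hull y2x y1x N21 c2 cW' l2k_gt0.
by rewrite leNgt lWk_gt0.
Qed.

Lemma simplicial_lower_cover_uniq : @simplicial_order_cone disp T R ->
  forall a b c : T, covers a c -> covers b c -> a = b.
Proof.
move=> simp a b c ac bc.
have /orP[ab | ba] :=
  simplicial_ub_comparable simp (ltW (covers_lt ac)) (ltW (covers_lt bc)).
  exact: covers_le_lt_eq ac ab (covers_lt bc).
by apply/esym/(covers_le_lt_eq bc ba (covers_lt ac)).
Qed.

End SimplicialCone.

Section MobiusInverse.
Context {disp : Order.disp_t} {T : finPOrderType disp} {R : realType}.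
Hypothesis lower_cover_uniq : forall a b c : T, covers a c -> covers b c -> a = b.

Definition cover_mx : 'M[R]_#|T| :=
  \matrix_(i, j) (if covers (enum_val j) (enum_val i) then 1 else 0).

Lemma cover_mobius_mx :
  cover_mx *m mobius_mx = \matrix_(i, k) (if enum_val k < enum_val i then 1 else 0).
Proof.
apply/matrixP => i k; rewrite !mxE.
rewrite (eq_bigr (fun j =>
  if covers (enum_val j) (enum_val i) && (enum_val k <= enum_val j) then 1 else 0)); last first.
  by move=> j _; rewrite !mxE; case: covers; case: (_ <= _); rewrite ?mulr1 ?mulr0.
pose P y := covers y (enum_val i) && (enum_val k <= y).
rewrite -big_mkcond -(big_enum_val_cond P (fun=> 1)) (eq_bigl [in [pred y | P y]]) //.
by rewrite sumr_const (card_covers_above lower_cover_uniq); case: (enum_val k < enum_val i).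
Qed.

Lemma mobius_mx_inv : invmx (@mobius_mx _ T R) = 1%:M - cover_mx.
Proof.
have inv_l : (1%:M - cover_mx) *m mobius_mx = 1%:M.
  rewrite mulmxBl mul1mx cover_mobius_mx; apply/matrixP => i k; rewrite !mxE.
  rewrite le_eqVlt (inj_eq enum_val_inj) [i == k]eq_sym.
  have [-> | _] := eqVneq k i; first by rewrite ltxx subr0.
  by case: (_ < _); rewrite ?subrr.
have [unit_M _] := mulmx1_unit (mulmx1C inv_l).
by rewrite -[RHS](mulmxK unit_M) inv_l mul1mx.
Qed.

Lemma invmx_mobius_mxE i j : invmx (@mobius_mx _ T R) i j =
  if i == j then 1 else if covers (enum_val j) (enum_val i) then -1 else 0.
Proof.
rewrite mobius_mx_inv !mxE; have [-> | _] := eqVneq i j; first by rewrite coversxx subr0.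
by case: covers; rewrite sub0r ?oppr0.
Qed.

End MobiusInverse.

Theorem lemma5 (R : realType) :
  (forall (disp : Order.disp_t) (T : finPOrderType disp),
     @simplicial_order_cone disp T R ->
     forall i j : 'I_#|T|,
       invmx (@mobius_mx disp T R) i j =
         if i == j then 1
         else if covers (enum_val j) (enum_val i) then -1 else 0)
  /\
  (forall (p : nat) (i j : 'I_#|'I_p|),
     invmx (@mobius_mx _ 'I_p R) i j =
       if val i == val j then 1
       else if val i == (val j).+1 then -1 else 0).
Proof.
split=> [disp T simp i j | p i j].
  by rewrite (invmx_mobius_mxE (simplicial_lower_cover_uniq simp)).
by rewrite (invmx_mobius_mxE (@ord_lower_cover_uniq p)) !enum_val_ord covers_ord.
Qed.
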